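(* Let $\Pi=(\mathsf A,\mathsf B)$ be a protocol and $z\in\mathbb N$. Then (1) $C^{\mathsf A,z}_\Pi$ is a measure over the $1$-leaves of $\Pi$: $C^{\mathsf A,z}_\Pi(\ell)\in[0,1]$ for every leaf $\ell$, and $C^{\mathsf A,z}_\Pi(\ell)=0$ whenever $\chi_\Pi(\ell)=0$; and (2) $\mathbb E_{\ell\leftarrow L_\Pi}[C^{\mathsf A,z}_\Pi(\ell)]=\sum_{j=0}^{z}\alpha_j\prod_{t=0}^{j-1}(1-\beta_t)(1-\alpha_t)$, where $\alpha_j=1-\mathrm{Best}_{\mathsf B}(\Pi_{(\mathsf A,j)})$, $\beta_j=1-\mathrm{Best}_{\mathsf A}(\Pi_{(\mathsf B,j)})$, and $\mathrm{Best}_{\mathsf A}(\perp)=\mathrm{Best}_{\mathsf B}(\perp)=1$.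
   Context: Protocols are $m$-round single-bit-message protocols identified with the complete binary tree of height $m$, with control scheme, edge probabilities $e_\Pi(u,ub)$, output $\chi_\Pi:\text{leaves}\to\{0,1\}$, visit probabilities $v_\Pi(u)$, leaf distribution $L_\Pi$; $\Pi_u$ is the subprotocol under node $u$ (or $\perp$ if $v_\Pi(u)=0$); expectations over $L_\perp$ are $0$; $\mathbb E_{L_{\Pi_u}}[M]$ is the expectation of the restriction of $M$ to leaves under $u$. $\mathsf A$-dominated measure $M^{\mathsf A}_\Pi$: for a 0-round protocol with leaf $\ell$, $M^{\mathsf A}_\Pi(\ell)=\chi_\Pi(\ell)$; otherwise for a leaf with first bit $b$, with $\mu_c=\mathbb E_{L_{\Pi_c}}[M^{\mathsf A}_{\Pi_c}]$: value $0$ if $e_\Pi(\lambda,b)=0$; $M^{\mathsf A}_{\Pi_b}(\ell)$ if $e_\Pi(\lambda,b)=1$, or if $e_\Pi(\lambda,b)\in(0,1)$ and ($\mathsf A$ controls the root or $\mu_b\le\mu_{1-b}$); $\frac{\mu_{1-b}}{\mu_b}M^{\mathsf A}_{\Pi_b}(\ell)$ otherwise. The $\mathsf B$-dominated measure $M^{\mathsf B}_\Pi$ is defined identically with $\mathsf A,\mathsf B$ exchanged and with base case $M^{\mathsf B}_\Pi(\ell)=1-\chi_\Pi(\ell)$. $M^{\mathsf A}_\perp,M^{\mathsf B}_\perp$ are the zero measure. Conditional protocol: for $\mathbb E_{L_\Pi}[M]<1$, $\Pi|_M$ has the same control and output and $e_{\Pi|_M}(u,ub)=0$ if $\mathbb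 E_{L_{\Pi_u}}[M]=1$, else $e_\Pi(u,ub)\frac{1-\mathbb E_{L_{\Pi_{ub}}}[M]}{1-\mathbb E_{L_{\Pi_u}}[M]}$; if $\mathbb E_{L_\Pi}[M]=1$ or $\Pi=\perp$, $\Pi|_M=\perp$. Sequence: $\Pi_{(\mathsf A,0)}=\Pi$, $\Pi_{(\mathsf B,j)}=\Pi_{(\mathsf A,j)}|_{M^{\mathsf A}_{\Pi_{(\mathsf A,j)}}}$, $\Pi_{(\mathsf A,j+1)}=\Pi_{(\mathsf B,j)}|_{M^{\mathsf B}_{\Pi_{(\mathsf B,j)}}}$. $C^{\mathsf A,z}_\Pi=\sum_{j=0}^z M^{\mathsf A}_{\Pi_{(\mathsf A,j)}}\prod_{t=0}^{j-1}(1-M^{\mathsf A}_{\Pi_{(\mathsf A,t)}})$ (pointwise on leaves). Valid attackers: deterministic strategies that never reach nodes unreachable in the honest protocol; $\mathrm{Best}_{\mathsf A}(\Pi')$ is the max over valid $\mathsf A'$ of the expected output of $(\mathsf A',\mathsf B)$, and $\mathrm{Best}_{\mathsf B}(\Pi')$ is the max over valid $\mathsf B'$ of $1$ minus the expected output of $(\mathsf A,\mathsf B')$. *)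

From HB Require Import structures.
From mathcomp Require Import all_boot all_order all_algebra.
From mathcomp Require Import boolp classical_sets reals.
Set Implicit Arguments. Unset Strict Implicit. Unset Printing Implicit Defensive.
Import Order.TTheory GRing.Theory Num.Theory.
Local Open Scope ring_scope.
Local Open Scope classical_set_scope.

Inductive party := PartyA | PartyB.

Definition party_eqb (p q : party) : bool :=
  match p, q with PartyA, PartyA | PartyB, PartyB => true | _, _ => false end.

Section Protocols.
Variable R : realType.

(* An m-round single-bit-message protocol = complete binary tree of height m.
   [Node c e0 e1 t0 t1] : root controlled by [c], e0 = e(root, 0), e1 = e(root,1),
   t0/t1 = subtrees under children 0/1.  [Leaf b] : 0-round protocol with output b.
   Nodes/leaves are addressed by bit strings (seq bool), leaves of a [proto m]
   being the strings of length m. *)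
Inductive proto : nat -> Type :=
| Leaf : bool -> proto 0
| Node : forall m, party -> R -> R -> proto m -> proto m -> proto m.+1.

Fixpoint valid_proto m (t : proto m) : Prop :=
  match t with
  | Leaf _ => True
  | Node _ _ e0 e1 t0 t1 =>
      [/\ 0 <= e0, 0 <= e1, e0 + e1 = 1, valid_proto t0 & valid_proto t1]
  end.

Definition measure := seq bool -> R.
Definition restr (M : measure) (b : bool) : measure := fun l => M (b :: l).

Fixpoint chi m (t : proto m) (l : seq bool) : bool :=
  match t with
  | Leaf c => c
  | Node _ _ _ _ t0 t1 =>
      match l with [::] => false | b :: l' => if b then chi t1 l' else chi t0 l' end
  end.

Fixpoint expect m (t : proto m) (M : measure) : R :=
  match t with
  | Leaf _ => M [::]
  | Node _ _ e0 e1 t0 t1 => e0 * expect t0 (restr M false) + e1 * expect t1 (restr M true)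
  end.

Fixpoint dom_measure (P : party) m (t : proto m) : measure :=
  match t with
  | Leaf c => fun _ => if P is PartyA then (c : nat)%:R else ((~~ c) : nat)%:R
  | Node _ q e0 e1 t0 t1 =>
      let M0 := dom_measure P t0 in
      let M1 := dom_measure P t1 in
      (* mu_c = E_{L_{Pi_c}}[M^P_{Pi_c}], with Pi_c = bot (expectation 0) if e(root,c)=0 *)
      let mu0 := if e0 == 0 then 0 else expect t0 M0 in
      let mu1 := if e1 == 0 then 0 else expect t1 M1 in
      fun l =>
        match l with
        | [::] => 0
        | b :: l' =>
          let eb := if b then e1 else e0 in
          let Mb := if b then M1 else M0 in
          let mub := if b then mu1 else mu0 in
          let muo := if b then mu0 else mu1 in
          if eb == 0 then 0
          else if eb == 1 then Mb l'
          else if (0 < eb < 1) && (party_eqb q P || (mub <= muo)) then Mb l'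
          else muo / mub * Mb l'
        end
  end.

(* conditional protocol; the flag [r] records whether the current node is
   reachable (visit probability <> 0) in the original protocol; expectations
   over L_bot are 0. *)
Fixpoint cond_aux (r : bool) m (t : proto m) (M : measure) : proto m :=
  match t with
  | Leaf c => Leaf c
  | Node _ q e0 e1 t0 t1 =>
      let Eu := if r then expect t M else 0 in
      let r0 := r && (e0 != 0) in
      let r1 := r && (e1 != 0) in
      let E0 := if r0 then expect t0 (restr M false) else 0 in
      let E1 := if r1 then expect t1 (restr M true) else 0 in
      Node q (if Eu == 1 then 0 else e0 * (1 - E0) / (1 - Eu))
             (if Eu == 1 then 0 else e1 * (1 - E1) / (1 - Eu))
             (cond_aux r0 t0 (restr M false)) (cond_aux r1 t1 (restr M true))
  end.

(* protocols-or-bot are [option (proto m)], None = bot *)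
Definition cond m (o : option (proto m)) (M : measure) : option (proto m) :=
  match o with
  | None => None
  | Some t => if expect t M == 1 then None else Some (cond_aux true t M)
  end.

Definition dom_measure_o (P : party) m (o : option (proto m)) : measure :=
  match o with None => fun _ => 0 | Some t => dom_measure P t end.

Fixpoint proto_seq m (t : proto m) (j : nat) : option (proto m) * option (proto m) :=
  let PiA := match j with
             | 0 => Some t
             | j'.+1 => let PiB := (proto_seq t j').2 in
                        cond PiB (dom_measure_o PartyB PiB)
             end in
  (PiA, cond PiA (dom_measure_o PartyA PiA)).

Definition PiA m (t : proto m) j := (proto_seq t j).1.
Definition PiB m (t : proto m) j := (proto_seq t j).2.

Definition CA m (t : proto m) (z : nat) : measure := fun l =>
  \sum_(j < z.+1) dom_measure_o PartyA (PiA t j) l *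
                  \prod_(i < j) (1 - dom_measure_o PartyA (PiA t i) l).

(* Attacks: a deterministic strategy for the cheating party P maps each node
   (bit string) to the bit it sends there. [attack_out P S t] is the expected
   output of the protocol where P plays S and the other party is honest. *)
Definition strategy := seq bool -> bool.
Definition sshift (S : strategy) (b : bool) : strategy := fun u => S (b :: u).

Fixpoint attack_out (P : party) (S : strategy) m (t : proto m) : R :=
  match t with
  | Leaf c => (c : nat)%:R
  | Node _ q e0 e1 t0 t1 =>
      if party_eqb q P then
        (if S [::] then attack_out P (sshift S true) t1 else attack_out P (sshift S false) t0)
      else e0 * attack_out P (sshift S false) t0 + e1 * attack_out P (sshift S true) t1
  end.

Fixpoint valid_attack (P : party) (S : strategy) m (t : proto m) : Prop :=
  match t with
  | Leaf _ => True
  | Node _ q e0 e1 t0 t1 =>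
      if party_eqb q P then
        (if S [::] then e1 != 0 /\ valid_attack P (sshift S true) t1
                   else e0 != 0 /\ valid_attack P (sshift S false) t0)
      else (e0 != 0 -> valid_attack P (sshift S false) t0) /\
           (e1 != 0 -> valid_attack P (sshift S true) t1)
  end.

(* Best_A: max expected output; Best_B: max of 1 - expected output
   (the max is attained, so sup = max) *)
Definition Best (P : party) m (t : proto m) : R :=
  sup [set x | exists S : strategy, valid_attack P S t /\
        x = (if P is PartyA then attack_out P S t else 1 - attack_out P S t)].

Definition Best_o (P : party) m (o : option (proto m)) : R :=
  match o with None => 1 | Some t => Best P t end.

Definition alpha m (t : proto m) j : R := 1 - Best_o PartyB (PiA t j).
Definition beta m (t : proto m) j : R := 1 - Best_o PartyA (PiB t j).

End Protocols.

From HB Require Import structures.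
From mathcomp Require Import all_boot all_order all_algebra.
From mathcomp Require Import boolp classical_sets reals.
From mathcomp Require Import ring lra.
Set Implicit Arguments. Unset Strict Implicit. Unset Printing Implicit Defensive.
Import Order.TTheory GRing.Theory Num.Theory.
Local Open Scope ring_scope.

(* E[M^A_Π] is the least probability of output 1 that a valid attack of B can
   force: M^A is built by backward induction, and at a node controlled by B the
   measure under the better child is scaled down to the mass of the worse one.
   Hence E[M^A_Π] = 1 - Best_B(Π) = α, and symmetrically E[M^B_Π] = 1 - Best_A(Π).
   Conditioning on a measure M with values in [0,1] satisfies
   (1 - E_Π[M]) E_{Π|M}[f] = E_Π[(1 - M) f].  Now C^{A,z} = M_0 + (1 - M_0) C',
   where C' is the same sum started one round later; C' lives on 1-leaves, where
   the B-dominated measure vanishes, so C' = (1 - M^B) C'.  Two conditionings give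
   E_Π[C^{A,z}] = α_0 + (1 - α_0)(1 - β_0) E_{Π_(A,1)}[C'], and the formula follows
   by induction on the number of rounds. *)

Section Protocols.
Variable R : realType.
Implicit Types (e x y : R) (M f : measure R).

Lemma ler_wpM2l_nz e x y : 0 <= e -> (e != 0 -> x <= y) -> e * x <= e * y.
Proof.
move=> e_ge0 le_xy; have [->|/le_xy] := eqVneq e 0; first by rewrite !mul0r.
exact: ler_wpM2l.
Qed.

Lemma mulr_ge0_nz e x : 0 <= e -> (e != 0 -> 0 <= x) -> 0 <= e * x.
Proof. by move=> e_ge0 x_ge0; have := ler_wpM2l_nz e_ge0 x_ge0; rewrite mulr0. Qed.

Lemma congr_mul_nz e x y : (e != 0 -> x = y) -> e * x = e * y.
Proof. by move=> eq_xy; have [->|/eq_xy->] := eqVneq e 0; rewrite ?mul0r. Qed.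

Lemma convex_eq1 (e0 e1 x0 x1 : R) : 0 <= e0 -> 0 <= e1 -> e0 + e1 = 1 ->
  (e0 != 0 -> x0 <= 1) -> (e1 != 0 -> x1 <= 1) -> e0 * x0 + e1 * x1 = 1 ->
  e0 * (1 - x0) = 0 /\ e1 * (1 - x1) = 0.
Proof.
move=> e0_ge0 e1_ge0 e01 x0_le1 x1_le1 x01.
have d0 : 0 <= e0 * (1 - x0) by apply: mulr_ge0_nz => // /x0_le1; rewrite subr_ge0.
have d1 : 0 <= e1 * (1 - x1) by apply: mulr_ge0_nz => // /x1_le1; rewrite subr_ge0.
have d01 : e0 * (1 - x0) + e1 * (1 - x1) = 0 by rewrite !mulrBr !mulr1; lra.
by split; lra.
Qed.

(* Conditioning sets to 0 every edge below a node it reaches with probability 0,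
   so conditioned protocols are distributions at reachable nodes only. *)
Fixpoint reach_valid m (t : proto R m) : Prop :=
  match t with
  | Leaf _ => True
  | Node _ _ e0 e1 t0 t1 =>
      [/\ 0 <= e0, 0 <= e1, e0 + e1 = 1, e0 != 0 -> reach_valid t0
        & e1 != 0 -> reach_valid t1]
  end.

Lemma valid_reach_valid m (t : proto R m) : valid_proto t -> reach_valid t.
Proof.
elim: t => [//|n q e0 e1 t0 IH0 t1 IH1] [e0_ge0 e1_ge0 e01 v0 v1].
by split=> // _; [exact: IH0 | exact: IH1].
Qed.

Lemma expect_node n q e0 e1 (t0 t1 : proto R n) M :
  expect (Node q e0 e1 t0 t1) M =
  e0 * expect t0 (restr M false) + e1 * expect t1 (restr M true).
Proof. by []. Qed.

Lemma expect0 m (t : proto R m) : expect t (fun=> 0) = 0.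
Proof.
by elim: t => [//|n q e0 e1 t0 IH0 t1 IH1]; rewrite expect_node IH0 IH1 !mulr0 addr0.
Qed.

Lemma expect_add m (t : proto R m) M f :
  expect t (fun l => M l + f l) = expect t M + expect t f.
Proof.
elim: t M f => [//|n q e0 e1 t0 IH0 t1 IH1] M f.
by rewrite !expect_node /restr IH0 IH1; ring.
Qed.

Lemma expect_scale m (t : proto R m) (k : R) M :
  expect t (fun l => k * M l) = k * expect t M.
Proof.
elim: t M => [//|n q e0 e1 t0 IH0 t1 IH1] M.
by rewrite !expect_node /restr IH0 IH1; ring.
Qed.

Lemma expect_ge0 m (t : proto R m) M :
  reach_valid t -> (forall l, 0 <= M l) -> 0 <= expect t M.
Proof.
elim: t M => [c|n q e0 e1 t0 IH0 t1 IH1] M; first by move=> _; apply.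
move=> [e0_ge0 e1_ge0 _ rv0 rv1] M_ge0; rewrite expect_node.
by apply: addr_ge0; apply: mulr_ge0_nz => // nz;
  [apply: IH0 (rv0 nz) _ | apply: IH1 (rv1 nz) _] => l; apply: M_ge0.
Qed.

Lemma expect_le1 m (t : proto R m) M :
  reach_valid t -> (forall l, M l <= 1) -> expect t M <= 1.
Proof.
elim: t M => [c|n q e0 e1 t0 IH0 t1 IH1] M; first by move=> _; apply.
move=> [e0_ge0 e1_ge0 e01 rv0 rv1] M_le1; rewrite expect_node -e01.
by apply: lerD; rewrite -[leRHS]mulr1; apply: ler_wpM2l_nz => // nz;
  [apply: IH0 (rv0 nz) _ | apply: IH1 (rv1 nz) _] => l; apply: M_le1.
Qed.

Lemma expect_cond_aux m (t : proto R m) M f :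
  reach_valid t -> (forall l, 0 <= M l <= 1) ->
  (1 - expect t M) * expect (cond_aux true t M) f =
  expect t (fun l => (1 - M l) * f l).
Proof.
elim: t M f => [//|n q e0 e1 t0 IH0 t1 IH1] M f.
move=> [e0_ge0 e1_ge0 e01 rv0 rv1] M_01 /=.
set E0 := expect t0 (restr M false); set E1 := expect t1 (restr M true).
set C0 := expect (cond_aux true t0 (restr M false)) (restr f false).
set C1 := expect (cond_aux true t1 (restr M true)) (restr f true).
have T0 : e0 * expect t0 (restr (fun l => (1 - M l) * f l) false) = e0 * ((1 - E0) * C0).
  by apply: congr_mul_nz => nz; rewrite IH0 //; [exact: rv0 | move=> l; apply: M_01].
have T1 : e1 * expect t1 (restr (fun l => (1 - M l) * f l) true) = e1 * ((1 - E1) * C1).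
  by apply: congr_mul_nz => nz; rewrite IH1 //; [exact: rv1 | move=> l; apply: M_01].
rewrite T0 T1; set Eu := e0 * E0 + e1 * E1.
have [Eu1|Eu_neq1] := eqVneq Eu 1.
  (* E[M] = 1 forces E[M] = 1 below every reachable child: both sides vanish. *)
  have E0_le1 (nz : e0 != 0) : E0 <= 1.
    by apply: expect_le1 (rv0 nz) _ => l; case/andP: (M_01 (false :: l)).
  have E1_le1 (nz : e1 != 0) : E1 <= 1.
    by apply: expect_le1 (rv1 nz) _ => l; case/andP: (M_01 (true :: l)).
  have [z0 z1] := convex_eq1 e0_ge0 e1_ge0 e01 E0_le1 E1_le1 Eu1.
  by rewrite Eu1 subrr mul0r !mulrA z0 z1 !mul0r addr0.
have denom_neq0 : 1 - Eu != 0 by rewrite subr_eq0 eq_sym.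
rewrite mulrDr; congr (_ + _).
  have [->|nz] := eqVneq e0 0; first by rewrite !mul0r mulr0.
  by rewrite /= mulrA [(1 - Eu) * _]mulrC divfK // -mulrA.
have [->|nz] := eqVneq e1 0; first by rewrite !mul0r mulr0.
by rewrite /= mulrA [(1 - Eu) * _]mulrC divfK // -mulrA.
Qed.

Lemma cond_aux_reach_valid m (t : proto R m) M :
  reach_valid t -> (forall l, 0 <= M l <= 1) -> expect t M != 1 ->
  reach_valid (cond_aux true t M).
Proof.
elim: t M => [//|n q e0 e1 t0 IH0 t1 IH1] M.
move=> [e0_ge0 e1_ge0 e01 rv0 rv1] M_01 Eu_neq1 /=; rewrite (negbTE Eu_neq1).
set E0 := expect t0 (restr M false); set E1 := expect t1 (restr M true).
have E0_le1 (nz : e0 != 0) : E0 <= 1.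
  by apply: expect_le1 (rv0 nz) _ => l; case/andP: (M_01 (false :: l)).
have E1_le1 (nz : e1 != 0) : E1 <= 1.
  by apply: expect_le1 (rv1 nz) _ => l; case/andP: (M_01 (true :: l)).
have Eu_lt1 : e0 * E0 + e1 * E1 < 1.
  rewrite lt_neqAle Eu_neq1 /= -e01.
  by apply: lerD; rewrite -[leRHS]mulr1; apply: ler_wpM2l_nz.
have w0 : e0 * (1 - (if e0 != 0 then E0 else 0)) = e0 * (1 - E0).
  by apply: congr_mul_nz => ->.
have w1 : e1 * (1 - (if e1 != 0 then E1 else 0)) = e1 * (1 - E1).
  by apply: congr_mul_nz => ->.
rewrite w0 w1; split.
- by apply: divr_ge0; [apply: mulr_ge0_nz => // /E0_le1; rewrite subr_ge0 | lra].
- by apply: divr_ge0; [apply: mulr_ge0_nz => // /E1_le1; rewrite subr_ge0 | lra].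
  rewrite -mulrDl; have -> : e0 * (1 - E0) + e1 * (1 - E1) = 1 - (e0 * E0 + e1 * E1).
    by rewrite !mulrBr !mulr1; lra.
  by rewrite divff // subr_eq0 gt_eqF.
- have [->|nz] := eqVneq e0 0; first by rewrite !mul0r eqxx.
  have [->|E0_neq1] := eqVneq E0 1; first by rewrite subrr mulr0 mul0r eqxx.
  by move=> _ /=; apply: IH0 (rv0 nz) _ E0_neq1 => l; apply: M_01.
- have [->|nz] := eqVneq e1 0; first by rewrite !mul0r eqxx.
  have [->|E1_neq1] := eqVneq E1 1; first by rewrite subrr mulr0 mul0r eqxx.
  by move=> _ /=; apply: IH1 (rv1 nz) _ E1_neq1 => l; apply: M_01.
Qed.

Lemma chi_cond_aux m (t : proto R m) r M : chi (cond_aux r t M) =1 chi t.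
Proof. by elim: t r M => [//|n q e0 e1 t0 IH0 t1 IH1] r M [|[] l] /=; rewrite ?IH0 ?IH1. Qed.

(* The factor [dom_measure] puts on the measure under a child with edge
   probability [eb], own mass [mub] and sibling mass [muo]; [c] says whether the
   dominating party controls the node. *)
Definition dom_coef (eb mub muo : R) (c : bool) : R :=
  if eb == 0 then 0 else if eb == 1 then 1
  else if (0 < eb < 1) && (c || (mub <= muo)) then 1 else muo / mub.

Definition dom_mu P n e (t : proto R n) : R :=
  if e == 0 then 0 else expect t (dom_measure P t).

Lemma dom_measure_node P n q e0 e1 (t0 t1 : proto R n) b l :
  dom_measure P (Node q e0 e1 t0 t1) (b :: l) =
  if b then dom_coef e1 (dom_mu P e1 t1) (dom_mu P e0 t0) (party_eqb q P) * dom_measure P t1 l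
  else dom_coef e0 (dom_mu P e0 t0) (dom_mu P e1 t1) (party_eqb q P) * dom_measure P t0 l.
Proof.
rewrite /dom_coef /dom_mu; case: b => /=; case: (e0 == 0); case: (e1 == 0);
  rewrite /= ?mul0r //; case: (_ == 1); rewrite ?mul1r //;
  case: (_ && _); rewrite ?mul1r ?mul0r //.
Qed.

Lemma dom_coef_bounds e mub muo c :
  0 <= e <= 1 -> 0 <= muo -> 0 <= dom_coef e mub muo c <= 1.
Proof.
move=> /andP[e_ge0 e_le1] muo_ge0; rewrite /dom_coef.
have [_|e_neq0] := eqVneq e 0; first by rewrite lexx ler01.
have [_|e_neq1] := eqVneq e 1; first by rewrite ler01 lexx.
rewrite lt_def e_neq0 e_ge0 lt_def eq_sym e_neq1 e_le1 /=.
case: c; rewrite /= ?lexx ?ler01 //.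
case: (lerP mub muo) => [_|lt_muo]; first by rewrite lexx ler01.
have mub_gt0 : 0 < mub := le_lt_trans muo_ge0 lt_muo.
by rewrite divr_ge0 ?(ltW mub_gt0) //= ler_pdivrMr // mul1r ltW.
Qed.

Lemma dom_coef_honest e mub muo x :
  0 <= e <= 1 -> e * (dom_coef e mub muo true * x) = e * x.
Proof.
move=> /andP[e_ge0 e_le1]; apply: congr_mul_nz => e_neq0; rewrite /dom_coef (negbTE e_neq0).
have [_|e_neq1] := eqVneq e 1; first by rewrite mul1r.
by rewrite lt_def e_neq0 e_ge0 lt_def eq_sym e_neq1 e_le1 mul1r.
Qed.

Lemma dom_coef_min e x y :
  0 < e < 1 -> 0 <= y -> dom_coef e x y false * x = Num.min x y.
Proof.
move=> e01 y_ge0; have /andP[e_gt0 e_lt1] := e01.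
rewrite /dom_coef e01 gt_eqF // lt_eqF //=.
case: (lerP x y) => [_|lt_yx]; first by rewrite mul1r.
by rewrite divfK // gt_eqF // (le_lt_trans y_ge0).
Qed.

Lemma dom_measure_eq0 P m (t : proto R m) l :
  (if P is PartyA then ~~ chi t l else chi t l) -> dom_measure P t l = 0.
Proof.
elim: t l => [c|n q e0 e1 t0 IH0 t1 IH1] [|b l] //; try by case: P; case: c.
by rewrite dom_measure_node; case: b => /= chi_l; rewrite ?IH0 ?IH1 ?mulr0.
Qed.

Lemma dom_measure_bounds P m (t : proto R m) l :
  reach_valid t -> 0 <= dom_measure P t l <= 1.
Proof.
elim: t l => [c|n q e0 e1 t0 IH0 t1 IH1] l; first by case: P; case: c; rewrite /= ?lexx ?ler01.
move=> [e0_ge0 e1_ge0 e01 rv0 rv1]; case: l => [|b l]; first by rewrite /= lexx ler01.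
have mu_ge0 e (u : proto R n) :
    (e != 0 -> reach_valid u) -> (forall l, reach_valid u -> 0 <= dom_measure P u l <= 1) ->
    0 <= dom_mu P e u.
  rewrite /dom_mu => rv_u u_01; have [//|nz] := eqVneq e 0.
  by apply: expect_ge0 (rv_u nz) _ => l'; case/andP: (u_01 l' (rv_u nz)).
have factor_bounds e (u : proto R n) mub muo :
    0 <= e <= 1 -> 0 <= muo -> (e != 0 -> reach_valid u) ->
    (forall l, reach_valid u -> 0 <= dom_measure P u l <= 1) ->
    0 <= dom_coef e mub muo (party_eqb q P) * dom_measure P u l <= 1.
  move=> e_01 muo_ge0 rv_u u_01.
  have [->|nz] := eqVneq e 0; first by rewrite /dom_coef eqxx mul0r lexx ler01.
  have /andP[c_ge0 c_le1] := dom_coef_bounds mub (party_eqb q P) e_01 muo_ge0.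
  have /andP[d_ge0 d_le1] := u_01 l (rv_u nz).
  by rewrite mulr_ge0 ?mulr_ile1.
rewrite dom_measure_node; case: b; apply: factor_bounds => //;
  by [apply/andP; split; lra | apply: mu_ge0].
Qed.

Definition expect_o m (o : option (proto R m)) M : R :=
  if o is Some t then expect t M else 0.

Definition reach_valid_o m (o : option (proto R m)) : Prop :=
  if o is Some t then reach_valid t else True.

Definition same_output m (t : proto R m) (o : option (proto R m)) : Prop :=
  if o is Some u then chi u =1 chi t else True.

Lemma expect_o0 m (o : option (proto R m)) : expect_o o (fun=> 0) = 0.
Proof. by case: o => [t|] //=; rewrite expect0. Qed.

Lemma expect_o_add m (o : option (proto R m)) M f :
  expect_o o (fun l => M l + f l) = expect_o o M + expect_o o f.
Proof. by case: o => [t|] /=; rewrite ?expect_add ?addr0. Qed.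

Lemma expect_o_cond m (o : option (proto R m)) M f :
  reach_valid_o o -> (forall l, 0 <= M l <= 1) ->
  expect_o o (fun l => (1 - M l) * f l) = (1 - expect_o o M) * expect_o (cond o M) f.
Proof.
case: o => [t|] /=; last by rewrite mulr0.
move=> rv_t M_01; rewrite -expect_cond_aux //.
by case: eqP => [->|_] /=; rewrite ?subrr ?mul0r.
Qed.

Lemma dom_measure_o_bounds P m (o : option (proto R m)) l :
  reach_valid_o o -> 0 <= dom_measure_o P o l <= 1.
Proof. by case: o => [t|] /=; [apply: dom_measure_bounds | rewrite lexx ler01]. Qed.

Lemma dom_measure_o_eq0 P m (t : proto R m) o l :
  same_output t o -> (if P is PartyA then ~~ chi t l else chi t l) ->
  dom_measure_o P o l = 0.
Proof. by case: o => [u|] //= chi_u; rewrite -chi_u; apply: dom_measure_eq0. Qed.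

Lemma reach_valid_o_cond P m (o : option (proto R m)) :
  reach_valid_o o -> reach_valid_o (cond o (dom_measure_o P o)).
Proof.
case: o => [t|] //= rv_t; case: eqP => // /eqP E_neq1.
by apply: cond_aux_reach_valid => // l; apply: dom_measure_bounds.
Qed.

Lemma same_output_cond m (t : proto R m) o M :
  same_output t o -> same_output t (cond o M).
Proof. by case: o => [u|] //= chi_u; case: ifP => //= _ l; rewrite chi_cond_aux. Qed.

Lemma PiAS m (t : proto R m) j :
  PiA t j.+1 = cond (PiB t j) (dom_measure_o PartyB (PiB t j)).
Proof. by []. Qed.

Lemma PiBE m (t : proto R m) j :
  PiB t j = cond (PiA t j) (dom_measure_o PartyA (PiA t j)).
Proof. by case: j. Qed.

Lemma proto_seq_ind m (t : proto R m) (Q : option (proto R m) -> Prop) :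
  Q (Some t) -> (forall P o, Q o -> Q (cond o (dom_measure_o P o))) ->
  forall j, Q (PiA t j) /\ Q (PiB t j).
Proof.
move=> Q_t Q_cond; elim=> [|j [_ QB]]; first by split => //; rewrite PiBE; apply: Q_cond.
have QA : Q (PiA t j.+1) by rewrite PiAS; apply: Q_cond.
by split => //; rewrite PiBE; apply: Q_cond.
Qed.

Definition other (P : party) : party := if P is PartyA then PartyB else PartyA.

Definition payoff (P : party) x : R := if P is PartyA then x else 1 - x.

Lemma party_eqb_other q P : party_eqb q (other P) = ~~ party_eqb q P.
Proof. by case: q; case: P. Qed.

Lemma payoff_other P x : payoff (other P) x = 1 - payoff P x.
Proof. by case: P => /=; rewrite ?subKr. Qed.

Lemma payoff_convex P (e0 e1 x0 x1 : R) : e0 + e1 = 1 ->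
  payoff P (e0 * x0 + e1 * x1) = e0 * payoff P x0 + e1 * payoff P x1.
Proof. by case: P => //= e01; rewrite !mulrBr !mulr1; lra. Qed.

Definition strategy_node (c : bool) (S0 S1 : strategy) : strategy :=
  fun u => if u is b :: u' then (if b then S1 u' else S0 u') else c.

Lemma sshift_node c S0 S1 b : sshift (strategy_node c S0 S1) b = if b then S1 else S0.
Proof. by case: b. Qed.

Definition min_payoff P m (t : proto R m) v : Prop :=
  (forall S, valid_attack (other P) S t -> v <= payoff P (attack_out (other P) S t)) /\
  exists2 S, valid_attack (other P) S t & payoff P (attack_out (other P) S t) = v.

Definition min_reachable (e0 e1 v0 v1 v : R) : Prop :=
  [/\ e0 != 0 -> v <= v0, e1 != 0 -> v <= v1
    & (e0 != 0 /\ v = v0) \/ (e1 != 0 /\ v = v1)].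

Lemma min_payoff_node_honest P n q (e0 e1 : R) (t0 t1 : proto R n) v0 v1 :
  party_eqb q P -> 0 <= e0 -> 0 <= e1 -> e0 + e1 = 1 ->
  (e0 != 0 -> min_payoff P t0 v0) -> (e1 != 0 -> min_payoff P t1 v1) ->
  min_payoff P (Node q e0 e1 t0 t1) (e0 * v0 + e1 * v1).
Proof.
move=> hq e0_ge0 e1_ge0 e01 min0 min1.
have [S0 opt0] : exists S0, e0 != 0 ->
    valid_attack (other P) S0 t0 /\ payoff P (attack_out (other P) S0 t0) = v0.
  by have [_|/min0[_ [S ? ?]]] := eqVneq e0 0; [exists (fun=> false) | exists S].
have [S1 opt1] : exists S1, e1 != 0 ->
    valid_attack (other P) S1 t1 /\ payoff P (attack_out (other P) S1 t1) = v1.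
  by have [_|/min1[_ [S ? ?]]] := eqVneq e1 0; [exists (fun=> false) | exists S].
split=> [S|].
  rewrite /= party_eqb_other hq /= payoff_convex // => -[val0 val1].
  apply: lerD; apply: ler_wpM2l_nz => // nz.
    by case: (min0 nz) => + _; apply; apply: val0.
  by case: (min1 nz) => + _; apply; apply: val1.
exists (strategy_node false S0 S1); rewrite /= party_eqb_other hq /= !sshift_node.
  by split=> nz; [case: (opt0 nz) | case: (opt1 nz)].
rewrite payoff_convex //; congr (_ + _); apply: congr_mul_nz => nz.
  by case: (opt0 nz).
by case: (opt1 nz).
Qed.

Lemma min_payoff_node_attacker P n q (e0 e1 : R) (t0 t1 : proto R n) v0 v1 v :
  ~~ party_eqb q P ->
  (e0 != 0 -> min_payoff P t0 v0) -> (e1 != 0 -> min_payoff P t1 v1) ->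
  min_reachable e0 e1 v0 v1 v -> min_payoff P (Node q e0 e1 t0 t1) v.
Proof.
rewrite -party_eqb_other => hq min0 min1 [le0 le1 attained]; split=> [S|].
  rewrite /= hq; case: (S [::]) => /= -[nz val].
    by apply: le_trans (le1 nz) _; case: (min1 nz) => + _; apply.
  by apply: le_trans (le0 nz) _; case: (min0 nz) => + _; apply.
case: attained => -[nz ->].
  have [_ [S val <-]] := min0 nz.
  by exists (strategy_node false S S); rewrite /= hq.
have [_ [S val <-]] := min1 nz.
by exists (strategy_node true S S); rewrite /= hq.
Qed.

Lemma dom_coef_attacker (e0 e1 x0 x1 : R) :
  0 <= e0 -> 0 <= e1 -> e0 + e1 = 1 -> (e0 != 0 -> 0 <= x0) -> (e1 != 0 -> 0 <= x1) ->
  let mu0 := if e0 == 0 then 0 else x0 in let mu1 := if e1 == 0 then 0 else x1 in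
  min_reachable e0 e1 x0 x1
    (e0 * (dom_coef e0 mu0 mu1 false * x0) + e1 * (dom_coef e1 mu1 mu0 false * x1)).
Proof.
move=> e0_ge0 e1_ge0 e01 x0_ge0 x1_ge0 mu0 mu1.
have [z0|nz0] := eqVneq e0 0.
  have e1_1 : e1 = 1 by lra.
  rewrite /dom_coef z0 e1_1 !eqxx oner_eq0 !mul0r !mul1r add0r.
  by split; rewrite ?eqxx ?lexx //; right; rewrite oner_neq0.
have [z1|nz1] := eqVneq e1 0.
  have e0_1 : e0 = 1 by lra.
  rewrite /dom_coef z1 e0_1 !eqxx oner_eq0 !mul0r !mul1r addr0.
  by split; rewrite ?eqxx ?lexx //; left; rewrite oner_neq0.
have e0_01 : 0 < e0 < 1 by rewrite lt_def nz0 e0_ge0 /=; lra.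
have e1_01 : 0 < e1 < 1 by rewrite lt_def nz1 e1_ge0 /=; lra.
rewrite /mu0 /mu1 (negbTE nz0) (negbTE nz1) !dom_coef_min ?x0_ge0 ?x1_ge0 //.
rewrite [Num.min x1 x0]minC -mulrDl e01 mul1r.
case: (lerP x0 x1) => h.
  by split=> [_|_|]; [rewrite lexx | exact: h | left].
by split=> [_|_|]; [exact: ltW | rewrite lexx | right].
Qed.

Lemma expect_dom_node P n q e0 e1 (t0 t1 : proto R n) :
  expect (Node q e0 e1 t0 t1) (dom_measure P (Node q e0 e1 t0 t1)) =
  e0 * (dom_coef e0 (dom_mu P e0 t0) (dom_mu P e1 t1) (party_eqb q P) *
        expect t0 (dom_measure P t0)) +
  e1 * (dom_coef e1 (dom_mu P e1 t1) (dom_mu P e0 t0) (party_eqb q P) *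
        expect t1 (dom_measure P t1)).
Proof.
rewrite expect_node; congr (_ * _ + _ * _); rewrite -expect_scale; congr expect.
  by apply/funext => l; rewrite /restr dom_measure_node.
by apply/funext => l; rewrite /restr dom_measure_node.
Qed.

Lemma min_payoff_dom P m (t : proto R m) :
  reach_valid t -> min_payoff P t (expect t (dom_measure P t)).
Proof.
elim: t => [c _|n q e0 e1 t0 IH0 t1 IH1 [e0_ge0 e1_ge0 e01 rv0 rv1]].
  split; last by exists (fun=> false); case: P; case: c; rewrite /= ?subrr ?subr0.
  by move=> S _; case: P; case: c; rewrite /= ?subrr ?subr0 lexx.
have min0 nz := IH0 (rv0 nz); have min1 nz := IH1 (rv1 nz).
have E_ge0 e (u : proto R n) : (e != 0 -> reach_valid u) ->
    e != 0 -> 0 <= expect u (dom_measure P u).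
  move=> rv_u nz; apply: expect_ge0 (rv_u nz) _ => l.
  by case/andP: (dom_measure_bounds P l (rv_u nz)).
rewrite expect_dom_node; have [hq|hq] := boolP (party_eqb q P).
  by rewrite !dom_coef_honest; [apply: min_payoff_node_honest | lra..].
apply: (min_payoff_node_attacker hq min0 min1).
exact: dom_coef_attacker (E_ge0 _ _ rv0) (E_ge0 _ _ rv1).
Qed.

Lemma sup_max (E : set R) v : E v -> ubound E v -> sup E = v.
Proof.
move=> Ev ubv; apply/le_anti; rewrite ge_sup //=; last by exists v.
by apply: sup_upper_bound => //; split; exists v.
Qed.

Lemma Best_other_dom P m (t : proto R m) :
  reach_valid t -> Best (other P) t = 1 - expect t (dom_measure P t).
Proof.
move=> /(min_payoff_dom P) [lb [S val out_S]].
apply: sup_max; first by exists S; split=> //; rewrite -/(payoff _ _) payoff_other out_S.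
move=> _ [S' [val' ->]]; rewrite -/(payoff _ _) payoff_other lerD2l lerN2.
exact: lb.
Qed.

Lemma Best_o_other P m (o : option (proto R m)) :
  reach_valid_o o -> Best_o (other P) o = 1 - expect_o o (dom_measure_o P o).
Proof. by case: o => [t|] /=; [apply: Best_other_dom | rewrite subr0]. Qed.

Definition first_success_sum (a c : nat -> R) k n : R :=
  \sum_(j < n) a (k + j)%N * \prod_(i < j) c (k + i)%N.

Lemma first_success_sum0 a c k : first_success_sum a c k 0 = 0.
Proof. exact: big_ord0. Qed.

Lemma first_success_sumS a c k n :
  first_success_sum a c k n.+1 = a k + c k * first_success_sum a c k.+1 n.
Proof.
rewrite /first_success_sum big_ord_recl /= addn0 big_ord0 mulr1 big_distrr.
congr (_ + _); apply: eq_bigr => j _ /=.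
rewrite big_ord_recl /= addn0 /bump /= add1n addnS -addSn mulrCA.
by congr (_ * (_ * _)); apply: eq_bigr => i _; rewrite /bump /= add1n addnS -addSn.
Qed.

Lemma first_success_sum_eq0 a c k n : (forall j, a j = 0) -> first_success_sum a c k n = 0.
Proof. by move=> a0; apply: big1 => j _; rewrite a0 mul0r. Qed.

Lemma first_success_sum_1B (d : nat -> R) k n :
  first_success_sum d (fun j => 1 - d j) k n = 1 - \prod_(i < n) (1 - d (k + i)%N).
Proof.
elim: n => [|n IHn]; first by rewrite first_success_sum0 big_ord0 subrr.
rewrite /first_success_sum big_ord_recr -/(first_success_sum d (fun j => 1 - d j) k n).
by rewrite IHn big_ord_recr /=; ring.
Qed.

Lemma first_success_sum_bounds (d : nat -> R) k n :
  (forall j, 0 <= d j <= 1) -> 0 <= first_success_sum d (fun j => 1 - d j) k n <= 1.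
Proof.
move=> d_01; have d1_01 i : 0 <= 1 - d i <= 1.
  by have /andP[? ?] := d_01 i; apply/andP; split; lra.
rewrite first_success_sum_1B subr_ge0 lerBlDr lerDl.
by rewrite prodr_ge0 ?prodr_ile1 // => i _; case/andP: (d1_01 (k + i)%N).
Qed.

Definition CA_tail m (t : proto R m) k n : measure R := fun l =>
  first_success_sum (fun j => dom_measure_o PartyA (PiA t j) l)
                    (fun j => 1 - dom_measure_o PartyA (PiA t j) l) k n.

Lemma reach_valid_proto_seq m (t : proto R m) j :
  reach_valid t -> reach_valid_o (PiA t j) /\ reach_valid_o (PiB t j).
Proof. by move=> rv_t; apply: proto_seq_ind => // P o; apply: reach_valid_o_cond. Qed.

Lemma same_output_proto_seq m (t : proto R m) j :
  same_output t (PiA t j) /\ same_output t (PiB t j).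
Proof. by apply: proto_seq_ind => // P o; apply: same_output_cond. Qed.

Lemma alpha_expect m (t : proto R m) j : reach_valid t ->
  alpha t j = expect_o (PiA t j) (dom_measure_o PartyA (PiA t j)).
Proof.
by case/(reach_valid_proto_seq j) => rvA _; rewrite /alpha (Best_o_other PartyA rvA) subKr.
Qed.

Lemma beta_expect m (t : proto R m) j : reach_valid t ->
  beta t j = expect_o (PiB t j) (dom_measure_o PartyB (PiB t j)).
Proof.
by case/(reach_valid_proto_seq j) => _ rvB; rewrite /beta (Best_o_other PartyB rvB) subKr.
Qed.

Lemma CA_tail_bounds m (t : proto R m) k n l :
  reach_valid t -> 0 <= CA_tail t k n l <= 1.
Proof.
move=> rv_t; apply: first_success_sum_bounds => j.
by apply: dom_measure_o_bounds; case: (reach_valid_proto_seq j rv_t).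
Qed.

Lemma CA_tail_eq0 m (t : proto R m) k n l : chi t l = false -> CA_tail t k n l = 0.
Proof.
move=> chi_l; apply: first_success_sum_eq0 => j.
by apply: (dom_measure_o_eq0 (t := t)); [case: (same_output_proto_seq t j) | rewrite chi_l].
Qed.

Lemma expect_CA_tail m (t : proto R m) n k : reach_valid t ->
  expect_o (PiA t k) (CA_tail t k n) =
  first_success_sum (alpha t) (fun j => (1 - beta t j) * (1 - alpha t j)) k n.
Proof.
move=> rv_t; elim: n k => [|n IHn] k.
  rewrite first_success_sum0 -(expect_o0 (PiA t k)); congr expect_o.
  by apply/funext => l; apply: first_success_sum0.
have [rvA rvB] := reach_valid_proto_seq k rv_t.
have CA_tail_BE : CA_tail t k.+1 n =
    (fun l => (1 - dom_measure_o PartyB (PiB t k) l) * CA_tail t k.+1 n l).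
  apply/funext => l; case chi_l: (chi t l); last by rewrite CA_tail_eq0 ?mulr0.
  rewrite (dom_measure_o_eq0 (t := t)) ?subr0 ?mul1r ?chi_l //.
  by case: (same_output_proto_seq t k).
have -> : CA_tail t k n.+1 = (fun l => dom_measure_o PartyA (PiA t k) l +
    (1 - dom_measure_o PartyA (PiA t k) l) * CA_tail t k.+1 n l).
  by apply/funext => l; rewrite /CA_tail first_success_sumS.
rewrite first_success_sumS expect_o_add -alpha_expect // expect_o_cond //; last first.
  by move=> l; apply: dom_measure_o_bounds.
rewrite -PiBE CA_tail_BE expect_o_cond //; last by move=> l; apply: dom_measure_o_bounds.
by rewrite -alpha_expect // -beta_expect // -PiAS IHn; ring.
Qed.

End Protocols.

Theorem lemma3p24 (R : realType) (m : nat) (Pi : proto R m) (z : nat) :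
  valid_proto Pi ->
  (forall l : seq bool, size l = m ->
     0 <= CA Pi z l <= 1 /\ (chi Pi l = false -> CA Pi z l = 0)) /\
  expect Pi (CA Pi z) =
    \sum_(j < z.+1) alpha Pi j *
       \prod_(t < j) ((1 - beta Pi t) * (1 - alpha Pi t)).
Proof.
move=> /valid_reach_valid rv_Pi.
have -> : CA Pi z = CA_tail Pi 0 z.+1 by [].
split; first by move=> l _; split; [apply: CA_tail_bounds | apply: CA_tail_eq0].
exact: (expect_CA_tail z.+1 0 rv_Pi).
Qed.
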